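(* Let $(X,d)$ be a metric space and let $U\subseteq F_{USCG}(X)$. Then the following statements are equivalent: (i) $U$ is compact in $(F_{USCG}(X),H_{\rm end})$; (ii) $U(\alpha)=\bigcup_{u\in U}[u]_\alpha$ is relatively compact in $X$ for each $\alpha\in(0,1]$, and $U$ is closed in $(F_{USCG}(X),H_{\rm end})$; (iii) $U(\alpha)$ is compact in $X$ for each $\alpha\in(0,1]$, and $U$ is closed in $(F_{USCG}(X),H_{\rm end})$.
   Context: A fuzzy set on $X$ is a function $u:X\to[0,1]$, with $\alpha$-cuts $[u]_\alpha=\{x: u(x)\ge\alpha\}$ for $\alpha\in(0,1]$ and $[u]_0=\overline{\{u>0\}}$. $F_{USC}(X)$ is the set of fuzzy sets with all $\alpha$-cuts ($\alpha\in[0,1]$) non-empty and closed; $F_{USCG}(X)=\{u\in F_{USC}(X): [u]_\alpha\text{ compact for all }\alpha\in(0,1]\}$. $X\times[0,1]$ is metrized by $\overline{d}((x,\alpha),(y,\beta))=d(x,y)+|\alpha-\beta|$; ${\rm end}\,u=\{(x,t)\in X\times[0,1]: u(x)\ge t\}$; $H_{\rm end}(u,v)=H({\rm end}\,u,{\rm end}\,v)$ where $H$ is the Hausdorff distance $H(A,B)=\max\{\sup_{a\in A}\inf_{b\in B}\overline{d}(a,b),\sup_{b\in B}\inf_{a\in A}\overline{d}(a,b)\}$. *)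

From Stdlib Require Import Reals List Classical.
From Coquelicot Require Import Coquelicot.
Open Scope R_scope.

Record is_metric (X : Type) (d : X -> X -> R) : Prop := {
  metric_nonneg : forall x y, 0 <= d x y;
  metric_eq0 : forall x y, d x y = 0 <-> x = y;
  metric_sym : forall x y, d x y = d y x;
  metric_triangle : forall x y z, d x z <= d x y + d y z
}.

Section DistTopology.
Variables (T : Type) (D : T -> T -> R).

Definition open_in (A : T -> Prop) : Prop :=
  forall x, A x -> exists e, 0 < e /\ forall y, D x y < e -> A y.

Definition closed_in (A : T -> Prop) : Prop :=
  open_in (fun x => ~ A x).

Definition closure_in (A : T -> Prop) : T -> Prop :=
  fun x => forall e, 0 < e -> exists y, A y /\ D x y < e.

Definition compact_in (K : T -> Prop) : Prop :=
  forall (I : Type) (O : I -> T -> Prop),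
    (forall i, open_in (O i)) ->
    (forall x, K x -> exists i, O i x) ->
    exists l : list I, forall x, K x -> exists i, In i l /\ O i x.

Definition rel_compact_in (A : T -> Prop) : Prop :=
  compact_in (closure_in A).
End DistTopology.

Section Fuzzy.
Variables (X : Type) (d : X -> X -> R).

Definition fuzzy_set (u : X -> R) : Prop := forall x, 0 <= u x <= 1.

Definition cut (u : X -> R) (a : R) : X -> Prop :=
  fun x => if Rlt_dec 0 a then a <= u x
           else @closure_in X d (fun y => 0 < u y) x.

Definition F_USC (u : X -> R) : Prop :=
  fuzzy_set u /\
  forall a, 0 <= a <= 1 -> (exists x, cut u a x) /\ @closed_in X d (cut u a).

Definition F_USCG (u : X -> R) : Prop :=
  F_USC u /\ forall a, 0 < a <= 1 -> @compact_in X d (cut u a).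

Definition FUSCG := { u : X -> R | F_USCG u }.

Definition dbar (p q : X * R) : R := d (fst p) (fst q) + Rabs (snd p - snd q).

Definition endo (u : X -> R) : X * R -> Prop :=
  fun p => 0 <= snd p <= 1 /\ u (fst p) >= snd p.

Definition dist_pt_set (a : X * R) (B : X * R -> Prop) : Rbar :=
  Glb_Rbar (fun s => exists b, B b /\ s = dbar a b).

Definition excess (A B : X * R -> Prop) : Rbar :=
  Lub_Rbar (fun r => exists a, A a /\ Finite r = dist_pt_set a B).

Definition Rbar_maximum (x y : Rbar) : Rbar :=
  if Rbar_le_dec x y then y else x.

Definition hausdorff (A B : X * R -> Prop) : Rbar :=
  Rbar_maximum (excess A B) (excess B A).

(* H_end on F_USCG(X); it is always finite (<= 1) since X x {0} is contained
   in every endograph *)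
Definition H_end (u v : FUSCG) : R :=
  real (hausdorff (endo (proj1_sig u)) (endo (proj1_sig v))).

Definition Ucut (U : FUSCG -> Prop) (a : R) : X -> Prop :=
  fun x => exists u, U u /\ cut (proj1_sig u) a x.
End Fuzzy.

(* Both sides are handled sequentially, compactness in a metric space being
   sequential compactness.

   (i) -> (iii): given x_n in U(a), pick u_n in U with u_n(x_n) >= a and a cluster
   point u in U of (u_n).  Along a subsequence the points (x_n, a) of the endographs
   of u_n get close to the endograph of u, so the x_n approach the compact cut
   [u]_(a/2) and cluster at a point of [u]_a, which is closed.

   (ii) -> (i): U is totally bounded.  Fix a finite eta-net of the closure of
   U(eta) and a finite eta-grid of heights; two members of U that reach the same
   grid heights near the same net points have endographs within 3 eta of each
   other, so finitely many tests classify U up to 3 eta and every sequence in U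
   has an H_end-Cauchy subsequence.  A Cauchy sequence (v_n) converges to the
   fuzzy set whose endograph is the lower Kuratowski limit of the endographs of
   the v_n; relative compactness of the U(a) makes its cuts compact, and closedness
   of U puts the limit in U.  (iii) -> (ii) is general topology. *)

From Stdlib Require Import Reals List Classical Lra Lia.
From Stdlib Require Import IndefiniteDescription ProofIrrelevance FunctionalExtensionality.
From Coquelicot Require Import Coquelicot.
Open Scope R_scope.

Arguments open_in {T} D A.
Arguments closed_in {T} D A.
Arguments closure_in {T} D A _.
Arguments compact_in {T} D K.
Arguments rel_compact_in {T} D A.
Arguments metric_nonneg {X d} _ x y.
Arguments metric_eq0 {X d} _ x y.
Arguments metric_sym {X d} _ x y.
Arguments metric_triangle {X d} _ x y z.

Lemma inv_succ_pos (n : nat) : 0 < / INR (S n).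
Proof. apply Rinv_0_lt_compat, lt_0_INR; lia. Qed.

Lemma inv_succ_antimono (m n : nat) : (m <= n)%nat -> / INR (S n) <= / INR (S m).
Proof. intros Hmn. apply Rinv_le_contravar; [apply lt_0_INR; lia | apply le_INR; lia]. Qed.

Lemma inv_succ_lt (e : R) : 0 < e -> exists N : nat, / INR (S N) < e.
Proof.
  intros He. destruct (archimed_cor1 e He) as [N [HN HN0]]. exists N.
  apply Rle_lt_trans with (/ INR N); [|exact HN].
  apply Rinv_le_contravar; [apply lt_0_INR; lia | apply le_INR; lia].
Qed.

Definition infinitely_often (A : nat -> Prop) : Prop :=
  forall N, exists n, (N <= n)%nat /\ A n.

Lemma infinitely_often_refine_tests (tests : list (nat -> Prop)) (A : nat -> Prop) :
  infinitely_often A ->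
  exists A', (forall n, A' n -> A n) /\ infinitely_often A' /\
    forall P, In P tests -> forall m n, A' m -> A' n -> P m -> P n.
Proof.
  revert A. induction tests as [|P tests IH]; intros A HA.
  - exists A. repeat split; auto. intros P [].
  - destruct (IH A HA) as [A1 [HA1 [Hinf1 Hconst1]]].
    destruct (classic (infinitely_often (fun n => A1 n /\ P n))) as [HP|HnP].
    + exists (fun n => A1 n /\ P n). repeat split; [firstorder | exact HP |].
      intros Q [<-|HQ] m n [Hm _] [Hn HPn]; [auto | apply Hconst1; auto].
    + exists (fun n => A1 n /\ ~ P n). repeat split; [firstorder | |].
      * intros N. apply NNPP. intros Hfin. apply HnP. intros M.
        destruct (Hinf1 (Nat.max N M)) as [n [Hn HA1n]].
        exists n. split; [lia|]. split; [exact HA1n|].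
        apply NNPP. intros HPn. apply Hfin. exists n. split; [lia | auto].
      * intros Q [<-|HQ] m n [Hm HPm] [Hn _]; [contradiction | apply Hconst1; auto].
Qed.

Lemma list_choice {A B : Type} (l : list A) (P : A -> B -> Prop) :
  (forall a, In a l -> exists b, P a b) ->
  exists lb, forall a, In a l -> exists b, In b lb /\ P a b.
Proof.
  induction l as [|a l IH]; intros Hl; [exists nil; intros ? []|].
  destruct (Hl a (or_introl eq_refl)) as [b Hb].
  destruct IH as [lb Hlb]; [intros c Hc; apply Hl; now right|].
  exists (b :: lb). intros c [<-|Hc]; [exists b; simpl; auto|].
  destruct (Hlb c Hc) as [b' [Hb' Pb']]. exists b'. simpl; auto.
Qed.

Section MetricSpace.
Variables (T : Type) (D : T -> T -> R).
Hypothesis HD : is_metric T D.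

Definition cluster_point (s : nat -> T) (y : T) : Prop :=
  forall e, 0 < e -> forall N, exists n, (N <= n)%nat /\ D y (s n) < e.

Definition tends_to (s : nat -> T) (y : T) : Prop :=
  forall e, 0 < e -> exists N, forall n, (N <= n)%nat -> D y (s n) < e.

Definition cauchy_seq (s : nat -> T) : Prop :=
  forall e, 0 < e -> exists N, forall m n, (N <= m)%nat -> (N <= n)%nat -> D (s m) (s n) < e.

Definition seq_compact (K : T -> Prop) : Prop :=
  forall s, (forall n, K (s n)) -> exists y, K y /\ cluster_point s y.

Definition finitely_classifiable (K : T -> Prop) : Prop :=
  forall e, 0 < e -> exists tests : list (T -> Prop),
    forall x y, K x -> K y -> (forall P, In P tests -> P x <-> P y) -> D x y < e.

Lemma dist_refl x : D x x = 0.
Proof. apply (metric_eq0 HD). reflexivity. Qed.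

Lemma closure_in_self (A : T -> Prop) x : A x -> closure_in D A x.
Proof. intros Ax e He. exists x. rewrite dist_refl. auto. Qed.

Lemma closed_in_closure (A : T -> Prop) x : closed_in D A -> closure_in D A x -> A x.
Proof.
  intros HA Hx. apply NNPP. intros Nx. destruct (HA x Nx) as [e [He Hball]].
  destruct (Hx e He) as [y [Ay Hxy]]. exact (Hball y Hxy Ay).
Qed.

Lemma closed_in_of_closure (A : T -> Prop) :
  (forall x, closure_in D A x -> A x) -> closed_in D A.
Proof.
  intros HA x Nx. apply NNPP. intros Hno. apply Nx, HA. intros e He.
  apply NNPP. intros Hfar. apply Hno. exists e. split; [exact He|].
  intros y Hy Ay. apply Hfar. eauto.
Qed.

Lemma closure_in_closed (A : T -> Prop) : closed_in D (closure_in D A).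
Proof.
  apply closed_in_of_closure. intros x Hx e He.
  destruct (Hx (e/2) ltac:(lra)) as [y [Hy Hxy]].
  destruct (Hy (e/2) ltac:(lra)) as [z [Az Hyz]].
  exists z. split; [exact Az|]. pose proof (metric_triangle HD x y z). lra.
Qed.

Lemma cluster_point_closure (A : T -> Prop) s y :
  (forall n, A (s n)) -> cluster_point s y -> closure_in D A y.
Proof. intros Hs Hy e He. destruct (Hy e He 0%nat) as [n [_ Hn]]. eauto. Qed.

Lemma tends_to_cluster_point s y : tends_to s y -> cluster_point s y.
Proof.
  intros Hy e He N. destruct (Hy e He) as [M HM].
  exists (Nat.max N M). split; [lia | apply HM; lia].
Qed.

Lemma cluster_point_subseq s y (eps : nat -> R) :
  (forall k, 0 < eps k) -> cluster_point s y ->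
  exists phi : nat -> nat, forall k, (k <= phi k)%nat /\ D y (s (phi k)) < eps k.
Proof.
  intros Heps Hy. apply (functional_choice (fun k n => (k <= n)%nat /\ D y (s n) < eps k)).
  intros k. exact (Hy _ (Heps k) k).
Qed.

Lemma cluster_point_of_subseq s (phi : nat -> nat) y :
  (forall k, (k <= phi k)%nat) -> cluster_point (fun k => s (phi k)) y -> cluster_point s y.
Proof.
  intros Hphi Hy e He N. destruct (Hy e He N) as [k [Hk Hyk]].
  exists (phi k). split; [specialize (Hphi k); lia | exact Hyk].
Qed.

Lemma cluster_point_of_asymptotic (K : T -> Prop) s z :
  seq_compact K -> (forall n, K (z n)) ->
  (forall e, 0 < e -> exists N, forall n, (N <= n)%nat -> D (s n) (z n) < e) ->
  exists y, K y /\ cluster_point s y.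
Proof.
  intros HK Hz Hsz. destruct (HK z Hz) as [y [Ky Hy]]. exists y. split; [exact Ky|].
  intros e He N. destruct (Hsz (e/2) ltac:(lra)) as [M HM].
  destruct (Hy (e/2) ltac:(lra) (Nat.max N M)) as [n [Hn Hyn]].
  exists n. split; [lia|]. specialize (HM n ltac:(lia)).
  pose proof (metric_triangle HD y (z n) (s n)). rewrite (metric_sym HD (z n)) in H. lra.
Qed.

Lemma compact_seq_compact (K : T -> Prop) : compact_in D K -> seq_compact K.
Proof.
  intros HK s Hs. apply NNPP. intros Hno.
  assert (Hfar : forall y, K y ->
            exists e N, 0 < e /\ forall n, (N <= n)%nat -> e <= D y (s n)).
  { intros y Ky. apply NNPP. intros Hnear. apply Hno. exists y. split; [exact Ky|].
    intros e He N. apply NNPP. intros HN. apply Hnear. exists e, N. split; [exact He|].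
    intros n Hn. apply Rnot_lt_le. intros Hlt. apply HN. eauto. }
  (* cover K by balls around each y that the tail of s avoids *)
  pose (O := fun (p : T * nat) z => exists e, 0 < e /\
          (forall n, (snd p <= n)%nat -> e <= D (fst p) (s n)) /\ D (fst p) z < e).
  destruct (HK (T * nat)%type O) as [l Hl].
  - intros p z [e [He [Htail Hz]]]. exists (e - D (fst p) z). split; [lra|].
    intros z' Hz'. exists e. repeat split; auto.
    pose proof (metric_triangle HD (fst p) z z'). lra.
  - intros y Ky. destruct (Hfar y Ky) as [e [N [He HN]]].
    exists (y, N), e. simpl. rewrite dist_refl. auto.
  - pose (M := fold_right Nat.max 0%nat (map snd l)).
    assert (HM : forall p, In p l -> (snd p <= M)%nat).
    { unfold M. clear. induction l as [|q l IH]; simpl; [tauto|].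
      intros p [<-|Hp]; [lia | specialize (IH p Hp); lia]. }
    destruct (Hl (s M) (Hs M)) as [p [Hp [e [He [Htail HsM]]]]].
    specialize (Htail M (HM p Hp)). lra.
Qed.

Lemma seq_compact_lebesgue (K : T -> Prop) (I : Type) (O : I -> T -> Prop) :
  seq_compact K -> (forall i, open_in D (O i)) -> (forall x, K x -> exists i, O i x) ->
  exists r, 0 < r /\ forall x, K x -> exists i, forall z, D x z < r -> O i z.
Proof.
  intros HK HO Hcov. apply NNPP. intros Hno.
  assert (Hbad : forall n : nat, exists x, K x /\
            forall i, exists z, D x z < / INR (S n) /\ ~ O i z).
  { intros n. apply NNPP. intros Hn. apply Hno. exists (/ INR (S n)).
    split; [apply inv_succ_pos|]. intros x Kx. apply NNPP. intros Hx.
    apply Hn. exists x. split; [exact Kx|]. intros i. apply NNPP. intros Hi.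
    apply Hx. exists i. intros z Hz. apply NNPP. intros Nz. apply Hi. eauto. }
  destruct (functional_choice _ Hbad) as [s Hs].
  destruct (HK s (fun n => proj1 (Hs n))) as [y [Ky Hy]].
  destruct (Hcov y Ky) as [i Hi]. destruct (HO i y Hi) as [e [He Hball]].
  destruct (inv_succ_lt (e/2) ltac:(lra)) as [N HN].
  destruct (Hy (e/2) ltac:(lra) N) as [n [Hn Hyn]].
  destruct (proj2 (Hs n) i) as [z [Hz Nz]]. apply Nz, Hball.
  pose proof (inv_succ_antimono _ _ Hn). pose proof (metric_triangle HD y (s n) z). lra.
Qed.

Lemma seq_compact_finite_net (K : T -> Prop) (r : R) :
  seq_compact K -> 0 < r ->
  exists l, (forall c, In c l -> K c) /\ forall x, K x -> exists c, In c l /\ D c x < r.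
Proof.
  intros HK Hr. destruct (classic (exists x0, K x0)) as [[x0 Kx0]|Hempty].
  2:{ exists nil. split; [intros c []|]. intros x Kx. exfalso. eauto. }
  apply NNPP. intros Hno.
  (* otherwise a greedy sequence of points at mutual distance >= r has no cluster point *)
  assert (Hnext : forall l : list T, exists x, (forall c, In c l -> K c) ->
            K x /\ forall c, In c l -> r <= D c x).
  { intros l. destruct (classic (forall c, In c l -> K c)) as [Hl|Hl].
    - apply NNPP. intros Hx. apply Hno. exists l. split; [exact Hl|]. intros x Kx.
      apply NNPP. intros Hfar. apply Hx. exists x. intros _. split; [exact Kx|].
      intros c Hc. apply Rnot_lt_le. intros Hlt. apply Hfar. eauto.
    - exists x0. contradiction. }
  destruct (functional_choice _ Hnext) as [next Hnext'].
  pose (prefix := fix prefix (n : nat) : list T :=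
          match n with O => nil | S n => next (prefix n) :: prefix n end).
  assert (Hprefix : forall n c, In c (prefix n) -> K c).
  { induction n as [|n IH]; simpl; [tauto|].
    intros c [<-|Hc]; [apply (Hnext' _ IH) | auto]. }
  assert (Hearlier : forall m n, (m < n)%nat -> In (next (prefix m)) (prefix n)).
  { intros m n Hmn. induction Hmn; simpl; auto. }
  destruct (HK (fun n => next (prefix n))) as [y [_ Hy]].
  { intros n. apply (Hnext' _ (Hprefix n)). }
  destruct (Hy (r/2) ltac:(lra) 0%nat) as [m [_ Hm]].
  destruct (Hy (r/2) ltac:(lra) (S m)) as [n [Hmn Hn]].
  pose proof (proj2 (Hnext' _ (Hprefix n)) _ (Hearlier m n Hmn)).
  pose proof (metric_triangle HD (next (prefix m)) y (next (prefix n))).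
  rewrite (metric_sym HD _ y) in H0. lra.
Qed.

Lemma seq_compact_compact (K : T -> Prop) : seq_compact K -> compact_in D K.
Proof.
  intros HK I O HO Hcov.
  destruct (seq_compact_lebesgue K I O HK HO Hcov) as [r [Hr Hleb]].
  destruct (seq_compact_finite_net K r HK Hr) as [l [HlK Hnet]].
  destruct (list_choice l (fun c i => forall z, D c z < r -> O i z)) as [li Hli].
  { intros c Hc. exact (Hleb c (HlK c Hc)). }
  exists li. intros x Kx. destruct (Hnet x Kx) as [c [Hc Hcx]].
  destruct (Hli c Hc) as [i [Hi HOi]]. eauto.
Qed.

Lemma dist_small_eq x y : (forall e, 0 < e -> D x y < e) -> x = y.
Proof.
  intros Hxy. apply (metric_eq0 HD). apply Rle_antisym; [|apply (metric_nonneg HD)].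
  apply Rnot_lt_le. intros Hpos. specialize (Hxy _ Hpos). lra.
Qed.

Lemma closed_subset_compact (A K : T -> Prop) :
  closed_in D A -> (forall x, A x -> K x) -> compact_in D K -> compact_in D A.
Proof.
  intros HA HAK HK. apply seq_compact_compact. intros s Hs.
  destruct (compact_seq_compact K HK s (fun n => HAK _ (Hs n))) as [y [_ Hy]].
  exists y. split; [|exact Hy]. apply (closed_in_closure A y HA).
  exact (cluster_point_closure A s y Hs Hy).
Qed.

Lemma compact_closed (K : T -> Prop) : compact_in D K -> closed_in D K.
Proof.
  intros HK. apply closed_in_of_closure. intros x Hx.
  assert (Happrox : forall n, exists y, K y /\ D x y < / INR (S n)).
  { intros n. apply Hx, inv_succ_pos. }
  destruct (functional_choice _ Happrox) as [s Hs].
  destruct (compact_seq_compact K HK s (fun n => proj1 (Hs n))) as [y [Ky Hy]].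
  replace x with y; [exact Ky|]. apply dist_small_eq. intros e He.
  destruct (inv_succ_lt (e/2) ltac:(lra)) as [N HN].
  destruct (Hy (e/2) ltac:(lra) N) as [n [Hn Hyn]].
  pose proof (proj2 (Hs n)). pose proof (inv_succ_antimono _ _ Hn).
  pose proof (metric_triangle HD y (s n) x). rewrite (metric_sym HD (s n) x) in H1. lra.
Qed.

Lemma compact_rel_compact (A : T -> Prop) : compact_in D A -> rel_compact_in D A.
Proof.
  intros HA. apply (closed_subset_compact _ A); [apply closure_in_closed | | exact HA].
  intros x. apply closed_in_closure, compact_closed, HA.
Qed.

Definition refinable (s : nat -> T) : Prop :=
  forall A e, infinitely_often A -> 0 < e ->
  exists A', (forall n, A' n -> A n) /\ infinitely_often A' /\
    forall m n, A' m -> A' n -> D (s m) (s n) < e.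

Lemma classifiable_refinable (K : T -> Prop) (s : nat -> T) :
  finitely_classifiable K -> (forall n, K (s n)) -> refinable s.
Proof.
  intros HK Hs A e HA He. destruct (HK e He) as [tests Htests].
  destruct (infinitely_often_refine_tests (map (fun P n => P (s n)) tests) A HA)
    as [A' [HA'A [HA' Hconst]]].
  exists A'. repeat split; [exact HA'A | exact HA' |].
  intros m n Hm Hn. apply Htests; [apply Hs | apply Hs |].
  intros P HP. pose proof (in_map (fun P n => P (s n)) _ _ HP) as HP'.
  split; apply (Hconst _ HP'); assumption.
Qed.

Lemma cauchy_subseq_of_refinable (s : nat -> T) :
  refinable s ->
  exists phi : nat -> nat, (forall k, (k <= phi k)%nat) /\ cauchy_seq (fun k => s (phi k)).
Proof.
  intros Hrefine.
  assert (Hstep : forall p : (nat -> Prop) * nat, exists A',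
            (forall n, A' n -> fst p n) /\ (infinitely_often (fst p) -> infinitely_often A' /\
              forall m n, A' m -> A' n -> D (s m) (s n) < / INR (S (snd p)))).
  { intros [A k]. destruct (classic (infinitely_often A)) as [HA|HA].
    - destruct (Hrefine A _ HA (inv_succ_pos k)) as [A' HA']. exists A'. simpl. tauto.
    - exists A. split; [auto | contradiction]. }
  destruct (functional_choice _ Hstep) as [step Hstep'].
  (* nested infinite index sets: on [level (S k)] the terms of s are 1/(k+1)-close *)
  pose (level := nat_rect (fun _ => nat -> Prop) (fun _ => True) (fun k A => step (A, k))).
  assert (Hlevel_inf : forall k, infinitely_often (level k)).
  { induction k as [|k IH]; [intros N; exists N; split; [lia | exact I]|].
    exact (proj1 (proj2 (Hstep' (level k, k)) IH)). }
  assert (Hlevel_nest : forall j k, (j <= k)%nat -> forall n, level k n -> level j n).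
  { intros j k Hjk. induction Hjk as [|k Hjk IH]; [auto|].
    intros n Hn. apply IH, (proj1 (Hstep' (level k, k)) n Hn). }
  destruct (functional_choice _ (fun k => Hlevel_inf (S k) k)) as [phi Hphi].
  exists phi. split; [intros k; apply Hphi|].
  intros e He. destruct (inv_succ_lt e He) as [N HN]. exists N. intros j k Hj Hk.
  eapply Rlt_trans; [|exact HN].
  apply (proj2 (proj2 (Hstep' (level N, N)) (Hlevel_inf N))).
  - apply (Hlevel_nest (S N) (S j)); [lia | apply Hphi].
  - apply (Hlevel_nest (S N) (S k)); [lia | apply Hphi].
Qed.

Lemma classifiable_cauchy_subseq (K : T -> Prop) (s : nat -> T) :
  finitely_classifiable K -> (forall n, K (s n)) ->
  exists phi : nat -> nat, (forall k, (k <= phi k)%nat) /\ cauchy_seq (fun k => s (phi k)).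
Proof. intros HK Hs. apply cauchy_subseq_of_refinable, (classifiable_refinable K); assumption. Qed.

End MetricSpace.

Arguments cluster_point {T} D s y.
Arguments tends_to {T} D s y.
Arguments cauchy_seq {T} D s.
Arguments seq_compact {T} D K.
Arguments finitely_classifiable {T} D K.
Arguments refinable {T} D s.

Lemma Lub_Rbar_finite (E : R -> Prop) (x0 M : R) :
  E x0 -> (forall x, E x -> x <= M) ->
  exists l, Lub_Rbar E = Finite l /\ (forall x, E x -> x <= l) /\
    (forall M', (forall x, E x -> x <= M') -> l <= M').
Proof.
  intros Hx0 HM. destruct (Lub_Rbar_correct E) as [Hub Hlub].
  destruct (Lub_Rbar E) as [l| |].
  - exists l. repeat split; [exact Hub|]. intros M' HM'. exact (Hlub (Finite M') HM').
  - exfalso. exact (Hlub (Finite M) HM).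
  - exfalso. exact (Hub x0 Hx0).
Qed.

Lemma Glb_Rbar_finite (E : R -> Prop) (x0 m : R) :
  E x0 -> (forall x, E x -> m <= x) ->
  exists l, Glb_Rbar E = Finite l /\ (forall x, E x -> l <= x) /\
    (forall m', (forall x, E x -> m' <= x) -> m' <= l).
Proof.
  intros Hx0 Hm. destruct (Glb_Rbar_correct E) as [Hlb Hglb].
  destruct (Glb_Rbar E) as [l| |].
  - exists l. repeat split; [exact Hlb|]. intros m' Hm'. exact (Hglb (Finite m') Hm').
  - exfalso. exact (Hlb x0 Hx0).
  - exfalso. exact (Hglb (Finite m) Hm).
Qed.

Lemma finite_levels (eta : R) : 0 < eta -> exists ls : list R,
  forall t, eta <= t <= 1 -> exists l, In l ls /\ eta <= l <= t /\ t < l + eta.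
Proof.
  intros Heta.
  assert (Hgrid : forall M : nat, exists ls : list R, forall t, eta <= t < eta * INR (S M) ->
            exists l, In l ls /\ eta <= l <= t /\ t < l + eta).
  { induction M as [|M [ls IH]]; [exists nil; intros t Ht; simpl in Ht; lra|].
    exists (eta * INR (S M) :: ls). intros t Ht.
    destruct (Rlt_le_dec t (eta * INR (S M))) as [Hlt|Hge].
    - destruct (IH t ltac:(lra)) as [l Hl]. exists l. simpl. tauto.
    - exists (eta * INR (S M)). split; [now left|].
      rewrite !S_INR in *. pose proof (pos_INR M). nra. }
  destruct (inv_succ_lt eta Heta) as [M HM]. destruct (Hgrid M) as [ls Hls].
  exists ls. intros t Ht. apply Hls. split; [lra|].
  pose proof (inv_succ_pos M). apply Rmult_lt_compat_r with (r := INR (S M)) in HM;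
    [|apply lt_0_INR; lia].
  rewrite Rinv_l in HM by (apply not_0_INR; lia). lra.
Qed.

Arguments cut {X} d u a _.
Arguments endo {X} u _.
Arguments dbar {X} d p q.
Arguments dist_pt_set {X} d a B.
Arguments excess {X} d A B.
Arguments F_USCG {X} d u.
Arguments FUSCG {X} d.
Arguments H_end {X} d u v.
Arguments Ucut {X} d U a _.

Section FuzzySets.
Variables (X : Type) (d : X -> X -> R).
Hypothesis Hd : is_metric X d.

Local Notation endg u := (endo (proj1_sig u)).

Lemma dbar_metric : is_metric (X * R) (dbar d).
Proof.
  unfold dbar. split.
  - intros p q. pose proof (metric_nonneg Hd (fst p) (fst q)).
    pose proof (Rabs_pos (snd p - snd q)). lra.
  - intros [x s] [y t]; simpl. split.
    2:{ intros [= <- <-]. rewrite (dist_refl _ _ Hd), Rminus_diag, Rabs_R0. lra. }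
    intros H0. pose proof (metric_nonneg Hd x y). pose proof (Rabs_pos (s - t)).
    assert (d x y = 0) as Hxy%(metric_eq0 Hd) by lra.
    assert (Rabs (s - t) = 0) as Hst by lra. apply Rabs_eq_0 in Hst. f_equal; [exact Hxy | lra].
  - intros p q. rewrite (metric_sym Hd), Rabs_minus_sym. reflexivity.
  - intros p q r. pose proof (metric_triangle Hd (fst p) (fst q) (fst r)).
    pose proof (Rabs_triang (snd p - snd q) (snd q - snd r)).
    replace (snd p - snd q + (snd q - snd r)) with (snd p - snd r) in H0 by ring. lra.
Qed.

Lemma dbar_fst_le p q : d (fst p) (fst q) <= dbar d p q.
Proof. unfold dbar. pose proof (Rabs_pos (snd p - snd q)). lra. Qed.

Lemma dbar_snd_le p q : Rabs (snd p - snd q) <= dbar d p q.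
Proof. unfold dbar. pose proof (metric_nonneg Hd (fst p) (fst q)). lra. Qed.

Lemma dbar_vertical x s t : dbar d (x, s) (x, t) = Rabs (s - t).
Proof. unfold dbar; simpl. rewrite (dist_refl _ _ Hd). ring. Qed.

Lemma dbar_horizontal x y t : dbar d (x, t) (y, t) = d x y.
Proof. unfold dbar; simpl. rewrite Rminus_diag, Rabs_R0. ring. Qed.

Lemma cut_pos (u : X -> R) a : 0 < a -> cut d u a = fun x => a <= u x.
Proof. intros Ha. unfold cut. destruct (Rlt_dec 0 a); [reflexivity | lra]. Qed.

Lemma Ucut_pos (U : FUSCG d -> Prop) a x :
  0 < a -> Ucut d U a x <-> exists w, U w /\ a <= proj1_sig w x.
Proof.
  intros Ha. unfold Ucut.
  split; intros [w [Uw Hw]]; exists w; rewrite (cut_pos _ a Ha) in *; auto.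
Qed.

Lemma FUSCG_bounds (u : FUSCG d) x : 0 <= proj1_sig u x <= 1.
Proof. destruct u as [f Hf]; simpl. destruct Hf as [[Hf _] _]. apply Hf. Qed.

Lemma FUSCG_normal (u : FUSCG d) : exists x, proj1_sig u x = 1.
Proof.
  destruct u as [f Hf]; simpl. destruct Hf as [[Hf Hcut] _].
  destruct (proj1 (Hcut 1 ltac:(lra))) as [x Hx].
  rewrite cut_pos in Hx by lra. exists x. specialize (Hf x). lra.
Qed.

Lemma FUSCG_level_closed (u : FUSCG d) a :
  0 < a <= 1 -> closed_in d (fun x => a <= proj1_sig u x).
Proof.
  intros Ha. destruct u as [f Hf]; simpl. destruct Hf as [[_ Hcut] _].
  rewrite <- (cut_pos f a) by lra. apply Hcut. lra.
Qed.

Lemma FUSCG_level_compact (u : FUSCG d) a :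
  0 < a <= 1 -> compact_in d (fun x => a <= proj1_sig u x).
Proof.
  intros Ha. destruct u as [f Hf]; simpl. destruct Hf as [_ Hcomp].
  rewrite <- (cut_pos f a) by lra. apply Hcomp, Ha.
Qed.

Lemma endo_bottom (u : FUSCG d) x : endg u (x, 0).
Proof. pose proof (FUSCG_bounds u x). split; simpl; lra. Qed.

Lemma endo_closed (u : FUSCG d) p :
  0 <= snd p <= 1 -> closure_in (dbar d) (endg u) p -> endg u p.
Proof.
  destruct p as [x t]; simpl. intros Ht Hp. split; [exact Ht|]. simpl.
  apply Rle_ge, Rnot_lt_le. intros Hlt. pose proof (FUSCG_bounds u x).
  (* x lies outside the closed level set at height halfway between u x and t *)
  pose (a := (proj1_sig u x + t) / 2).
  destruct (FUSCG_level_closed u a ltac:(unfold a; lra) x ltac:(unfold a; lra))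
    as [e [He Hball]].
  destruct (Hp (Rmin e ((t - proj1_sig u x) / 2))) as [[y s] [[_ Hys] Hdist]].
  { apply Rmin_glb_lt; lra. }
  pose proof (Rmin_l e ((t - proj1_sig u x) / 2)). pose proof (Rmin_r e ((t - proj1_sig u x) / 2)).
  pose proof (dbar_fst_le (x, t) (y, s)). pose proof (dbar_snd_le (x, t) (y, s)).
  pose proof (Rle_abs (t - s)). simpl in *.
  apply (Hball y); [lra | unfold a; lra].
Qed.

Lemma FUSCG_ext (u v : FUSCG d) : (forall x, proj1_sig u x = proj1_sig v x) -> u = v.
Proof.
  destruct u as [f Hf], v as [g Hg]; simpl. intros Hfg.
  apply subset_eq_compat, functional_extensionality, Hfg.
Qed.

Definition sub_nbhd (r : R) (A B : X * R -> Prop) : Prop :=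
  forall p, A p -> exists q, B q /\ dbar d p q < r.

Lemma sub_nbhd_mono r r' (A B : X * R -> Prop) : r <= r' -> sub_nbhd r A B -> sub_nbhd r' A B.
Proof.
  intros Hrr' HAB p Hp. destruct (HAB p Hp) as [q [Hq Hpq]]. exists q. split; [exact Hq | lra].
Qed.

Lemma sub_nbhd_trans r s (A B C : X * R -> Prop) :
  sub_nbhd r A B -> sub_nbhd s B C -> sub_nbhd (r + s) A C.
Proof.
  intros HAB HBC p Hp. destruct (HAB p Hp) as [q [Hq Hpq]].
  destruct (HBC q Hq) as [q' [Hq' Hqq']]. exists q'. split; [exact Hq'|].
  pose proof (metric_triangle dbar_metric p q q'). lra.
Qed.

Lemma dist_pt_set_spec a (B : X * R -> Prop) b0 :
  B b0 -> exists r, dist_pt_set d a B = Finite r /\ (forall b, B b -> r <= dbar d a b) /\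
    (forall r', r < r' -> exists b, B b /\ dbar d a b < r').
Proof.
  intros Hb0.
  destruct (Glb_Rbar_finite (fun s => exists b, B b /\ s = dbar d a b) (dbar d a b0) 0)
    as [r [Hr [Hlb Hglb]]]; [eauto | intros s [b [_ ->]]; apply (metric_nonneg dbar_metric)|].
  exists r. repeat split; [exact Hr | intros b Hb; apply Hlb; eauto |].
  intros r' Hr'. apply NNPP. intros Hfar. assert (r' <= r); [|lra].
  apply Hglb. intros s [b [Hb ->]]. apply Rnot_lt_le. intros Hlt. apply Hfar. eauto.
Qed.

Lemma excess_spec (A B : X * R -> Prop) a0 :
  A a0 -> (forall a, A a -> exists b, B b /\ dbar d a b <= 1) ->
  exists e, excess d A B = Finite e /\ 0 <= e /\
    (forall r, e < r -> sub_nbhd r A B) /\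
    (forall r, (forall del, 0 < del -> sub_nbhd (r + del) A B) -> e <= r).
Proof.
  intros Ha0 Hnear.
  assert (Hdist : forall a, A a -> exists r, dist_pt_set d a B = Finite r /\ 0 <= r <= 1 /\
            (forall b, B b -> r <= dbar d a b) /\
            (forall r', r < r' -> exists b, B b /\ dbar d a b < r')).
  { intros a Ha. destruct (Hnear a Ha) as [b [Hb Hab]].
    destruct (dist_pt_set_spec a B b Hb) as [r [Hr [Hlb Hglb]]].
    exists r. repeat split; auto; [|specialize (Hlb b Hb); lra].
    apply Rnot_lt_le. intros Hneg. destruct (Hglb 0 Hneg) as [b' [_ Hb']].
    pose proof (metric_nonneg dbar_metric a b'). lra. }
  destruct (Hdist a0 Ha0) as [r0 [Hr0 [Hr0b _]]].
  destruct (Lub_Rbar_finite (fun r => exists a, A a /\ Finite r = dist_pt_set d a B) r0 1)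
    as [e [He [Hub Hlub]]].
  { exists a0. auto. }
  { intros r [a [Ha Hr]]. destruct (Hdist a Ha) as [r' [Hr' [Hb _]]].
    rewrite Hr' in Hr. injection Hr as ->. lra. }
  exists e. split; [exact He|]. split; [|split].
  - assert (r0 <= e) by (apply Hub; eauto). lra.
  - intros r Hr a Ha. destruct (Hdist a Ha) as [ra [Hra [_ [_ Hclose]]]].
    apply Hclose. assert (ra <= e) by (apply Hub; eauto). lra.
  - intros r Hr. apply Hlub. intros ra [a [Ha Hra]].
    destruct (Hdist a Ha) as [ra' [Hra' [_ [Hlb _]]]]. rewrite Hra' in Hra. injection Hra as ->.
    apply Rnot_lt_le. intros Hlt. destruct (Hr (ra' - r) ltac:(lra) a Ha) as [b [Hb Hab]].
    specialize (Hlb b Hb). lra.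
Qed.

Definition endo_close (r : R) (u v : FUSCG d) : Prop :=
  sub_nbhd r (endg u) (endg v) /\ sub_nbhd r (endg v) (endg u).

Lemma excess_endo_spec (u v : FUSCG d) : exists e,
  excess d (endg u) (endg v) = Finite e /\ 0 <= e /\
  (forall r, e < r -> sub_nbhd r (endg u) (endg v)) /\
  (forall r, (forall del, 0 < del -> sub_nbhd (r + del) (endg u) (endg v)) -> e <= r).
Proof.
  destruct (FUSCG_normal u) as [x0 _].
  apply (excess_spec _ _ (x0, 0) (endo_bottom u x0)).
  (* X x {0} lies in every endograph, so each excess is at most 1 *)
  intros [x t] [Ht _]. exists (x, 0). split; [apply endo_bottom|].
  rewrite dbar_vertical. simpl in Ht. rewrite Rminus_0_r, Rabs_right; lra.
Qed.

Lemma H_end_spec (u v : FUSCG d) :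
  0 <= H_end d u v /\ (forall r, H_end d u v < r -> endo_close r u v) /\
  (forall r, (forall del, 0 < del -> endo_close (r + del) u v) -> H_end d u v <= r).
Proof.
  destruct (excess_endo_spec u v) as [e1 [He1 [He1_nonneg [He1_lt He1_le]]]].
  destruct (excess_endo_spec v u) as [e2 [He2 [He2_nonneg [He2_lt He2_le]]]].
  replace (H_end d u v) with (Rmax e1 e2).
  2:{ unfold H_end, hausdorff, Rbar_maximum. rewrite He1, He2.
      destruct (Rbar_le_dec e1 e2); simpl in *; [apply Rmax_right | apply Rmax_left]; lra. }
  pose proof (Rmax_l e1 e2). pose proof (Rmax_r e1 e2). repeat split.
  - lra.
  - apply He1_lt. lra.
  - apply He2_lt. lra.
  - intros r Hr. apply Rmax_lub; [apply He1_le | apply He2_le]; intros del Hdel; apply Hr, Hdel.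
Qed.

Lemma H_end_lt_close (u v : FUSCG d) r : H_end d u v < r -> endo_close r u v.
Proof. apply H_end_spec. Qed.

Lemma H_end_le_of_forall_close (u v : FUSCG d) r :
  (forall del, 0 < del -> endo_close (r + del) u v) -> H_end d u v <= r.
Proof. apply H_end_spec. Qed.

Lemma H_end_le_of_close (u v : FUSCG d) r : endo_close r u v -> H_end d u v <= r.
Proof.
  intros [Huv Hvu]. apply H_end_le_of_forall_close. intros del Hdel.
  split; apply (sub_nbhd_mono r); auto; lra.
Qed.

Lemma H_end_sym (u v : FUSCG d) : H_end d u v = H_end d v u.
Proof.
  assert (Hle : forall u v : FUSCG d, H_end d u v <= H_end d v u).
  { clear u v. intros u v. apply H_end_le_of_forall_close. intros del Hdel.
    destruct (H_end_lt_close v u (H_end d v u + del) ltac:(lra)). split; assumption. }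
  apply Rle_antisym; apply Hle.
Qed.

Lemma H_end_zero_le (u v : FUSCG d) x : H_end d u v = 0 -> proj1_sig u x <= proj1_sig v x.
Proof.
  intros H0. pose proof (FUSCG_bounds u x).
  enough (Hx : endg v (x, proj1_sig u x)) by (destruct Hx; simpl in *; lra).
  apply endo_closed; [exact H|]. intros e He.
  apply (proj1 (H_end_lt_close u v e ltac:(lra))). split; simpl; lra.
Qed.

Lemma H_end_metric : is_metric (FUSCG d) (H_end d).
Proof.
  split.
  - intros u v. apply H_end_spec.
  - intros u v. split.
    + intros H0. apply FUSCG_ext. intros x. apply Rle_antisym; apply H_end_zero_le;
        [exact H0 | rewrite H_end_sym; exact H0].
    + intros <-. apply Rle_antisym; [|apply H_end_spec]. apply H_end_le_of_forall_close.
      intros del Hdel. split; intros p Hp; exists p; split;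
        [exact Hp | rewrite (dist_refl _ _ dbar_metric); lra | exact Hp |
         rewrite (dist_refl _ _ dbar_metric); lra].
  - exact H_end_sym.
  - intros u v w. apply H_end_le_of_forall_close. intros del Hdel.
    destruct (H_end_lt_close u v (H_end d u v + del / 2) ltac:(lra)) as [Huv Hvu].
    destruct (H_end_lt_close v w (H_end d v w + del / 2) ltac:(lra)) as [Hvw Hwv].
    replace (H_end d u v + H_end d v w + del)
      with ((H_end d u v + del / 2) + (H_end d v w + del / 2)) by lra.
    split; [exact (sub_nbhd_trans _ _ _ _ _ Huv Hvw)|].
    rewrite Rplus_comm. exact (sub_nbhd_trans _ _ _ _ _ Hwv Hvu).
Qed.

Lemma cluster_of_endo_approx (u : FUSCG d) a (s : nat -> X) :
  0 < a <= 1 ->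
  (forall k, exists q, endg u q /\ dbar d (s k, a) q < Rmin (a / 2) (/ INR (S k))) ->
  exists y, a <= proj1_sig u y /\ cluster_point d s y.
Proof.
  intros Ha Hq. destruct (functional_choice _ Hq) as [q Hq'].
  assert (Hnear : forall e, 0 < e -> exists N, forall k, (N <= k)%nat -> dbar d (s k, a) (q k) < e).
  { intros e He. destruct (inv_succ_lt e He) as [N HN]. exists N. intros k Hk.
    pose proof (inv_succ_antimono _ _ Hk). pose proof (Rmin_r (a / 2) (/ INR (S k))).
    pose proof (Hq' k). lra. }
  assert (Hlevel : forall k, a / 2 <= proj1_sig u (fst (q k))).
  { intros k. destruct (Hq' k) as [[_ Hqk] Hdist].
    pose proof (dbar_snd_le (s k, a) (q k)). pose proof (Rle_abs (a - snd (q k))).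
    pose proof (Rmin_l (a / 2) (/ INR (S k))). simpl in *. lra. }
  destruct (cluster_point_of_asymptotic _ _ Hd _ s (fun k => fst (q k))
              (compact_seq_compact _ _ Hd _ (FUSCG_level_compact u (a / 2) ltac:(lra))) Hlevel)
    as [y [_ Hy]].
  { intros e He. destruct (Hnear e He) as [N HN]. exists N. intros k Hk.
    pose proof (dbar_fst_le (s k, a) (q k)). specialize (HN k Hk). simpl in *. lra. }
  exists y. split; [|exact Hy].
  enough (Hya : endg u (y, a)) by (destruct Hya as [_ Hya]; simpl in Hya; lra).
  apply endo_closed; [simpl; lra|]. intros e He.
  destruct (Hnear (e / 2) ltac:(lra)) as [N HN].
  destruct (Hy (e / 2) ltac:(lra) N) as [k [Hk Hyk]].
  exists (q k). split; [apply Hq'|].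
  pose proof (metric_triangle dbar_metric (y, a) (s k, a) (q k)).
  rewrite dbar_horizontal in H. specialize (HN k Hk). lra.
Qed.

Lemma compact_Ucut_compact (U : FUSCG d -> Prop) a :
  compact_in (H_end d) U -> 0 < a <= 1 -> compact_in d (Ucut d U a).
Proof.
  intros HU Ha. apply (seq_compact_compact _ _ Hd). intros s Hs.
  assert (Hw : forall n, exists w, U w /\ a <= proj1_sig w (s n)).
  { intros n. apply (Ucut_pos U a (s n)); [lra | apply Hs]. }
  destruct (functional_choice _ Hw) as [w Hw'].
  destruct (compact_seq_compact _ _ H_end_metric U HU w (fun n => proj1 (Hw' n)))
    as [wc [Uwc Hwc]].
  destruct (cluster_point_subseq _ _ w wc (fun k => Rmin (a / 2) (/ INR (S k)))
              (fun k => Rmin_pos (a / 2) _ ltac:(lra) (inv_succ_pos k)) Hwc) as [phi Hphi].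
  destruct (cluster_of_endo_approx wc a (fun k => s (phi k)) Ha) as [y [Hy Hsy]].
  { intros k. apply (proj2 (H_end_lt_close _ _ _ (proj2 (Hphi k)))).
    split; simpl; [lra | apply Rle_ge, Hw']. }
  exists y. split.
  - apply Ucut_pos; [lra|]. eauto.
  - exact (cluster_point_of_subseq _ _ _ _ _ (fun k => proj1 (Hphi k)) Hsy).
Qed.

Definition reaches_near (w : FUSCG d) (eta : R) (y : X) (l : R) : Prop :=
  exists x, l <= proj1_sig w x /\ d y x < eta.

Lemma sub_nbhd_of_level_tests (u v : FUSCG d) eta (ys : list X) (ls : list R) :
  0 < eta ->
  (forall x, eta <= proj1_sig u x -> exists y, In y ys /\ d y x < eta) ->
  (forall t, eta <= t <= 1 -> exists l, In l ls /\ eta <= l <= t /\ t < l + eta) ->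
  (forall y l, In y ys -> In l ls -> reaches_near u eta y l -> reaches_near v eta y l) ->
  sub_nbhd (3 * eta) (endg u) (endg v).
Proof.
  intros Heta Hnet Hlevels Htests [x t] [Ht Hxt]; simpl in *.
  destruct (Rlt_le_dec t eta) as [Hlow|Hhigh].
  - exists (x, 0). split; [apply endo_bottom|].
    rewrite dbar_vertical, Rminus_0_r, Rabs_right; lra.
  - destruct (Hlevels t ltac:(lra)) as [l [Hl [Hlt Htl]]].
    destruct (Hnet x ltac:(lra)) as [y [Hy Hyx]].
    destruct (Htests y l Hy Hl) as [x' [Hx' Hyx']]; [exists x; split; lra|].
    exists (x', l). split; [split; simpl; lra|].
    unfold dbar; simpl. pose proof (metric_triangle Hd x y x').
    rewrite (metric_sym Hd x y) in H. rewrite Rabs_right; lra.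
Qed.

Lemma FUSCG_classifiable (U : FUSCG d -> Prop) :
  (forall a, 0 < a <= 1 -> rel_compact_in d (Ucut d U a)) -> finitely_classifiable (H_end d) U.
Proof.
  intros HK e He. pose (eta := Rmin e 1 / 4).
  assert (Heta : 0 < eta /\ eta <= 1 /\ 3 * eta < e).
  { unfold eta. pose proof (Rmin_l e 1). pose proof (Rmin_r e 1).
    pose proof (Rmin_pos e 1 He Rlt_0_1). lra. }
  destruct (seq_compact_finite_net _ _ Hd _ eta
              (compact_seq_compact _ _ Hd _ (HK eta ltac:(lra))) ltac:(lra)) as [ys [_ Hys]].
  destruct (finite_levels eta ltac:(lra)) as [ls Hls].
  exists (map (fun yl w => reaches_near w eta (fst yl) (snd yl)) (list_prod ys ls)).
  intros u v Uu Uv Htests. apply Rle_lt_trans with (3 * eta); [|lra].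
  assert (Hnet : forall w, U w ->
            forall x, eta <= proj1_sig w x -> exists y, In y ys /\ d y x < eta).
  { intros w Uw x Hx. apply Hys, (closure_in_self _ _ Hd), Ucut_pos; [lra|]. eauto. }
  assert (Htest : forall y l, In y ys -> In l ls ->
            reaches_near u eta y l <-> reaches_near v eta y l).
  { intros y l Hy Hl. exact (Htests _ (in_map _ _ (y, l) (in_prod _ _ y l Hy Hl))). }
  apply H_end_le_of_close. split; apply (sub_nbhd_of_level_tests _ _ eta ys ls); try tauto.
  - apply Hnet, Uu.
  - intros y l Hy Hl. apply Htest; assumption.
  - apply Hnet, Uv.
  - intros y l Hy Hl. apply Htest; assumption.
Qed.

Section CauchyLimit.
Variable U : FUSCG d -> Prop.
Hypothesis HK : forall a, 0 < a <= 1 -> rel_compact_in d (Ucut d U a).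
Variable v : nat -> FUSCG d.
Hypothesis Hv : forall n, U (v n).
Hypothesis Hv_cauchy : cauchy_seq (H_end d) v.

Definition liminf_endo (p : X * R) : Prop :=
  0 <= snd p <= 1 /\ forall e, 0 < e -> exists N, forall n, (N <= n)%nat ->
    exists q, endg (v n) q /\ dbar d p q < e.

Lemma liminf_endo_of_frequently p :
  0 <= snd p <= 1 ->
  (forall e, 0 < e -> forall N, exists m, (N <= m)%nat /\
     exists q, endg (v m) q /\ dbar d p q < e) ->
  liminf_endo p.
Proof.
  intros Hp Hfreq. split; [exact Hp|]. intros e He.
  destruct (Hv_cauchy (e / 2) ltac:(lra)) as [N HN]. exists N. intros n Hn.
  destruct (Hfreq (e / 2) ltac:(lra) N) as [m [Hm [q [Hq Hpq]]]].
  destruct (proj1 (H_end_lt_close _ _ _ (HN m n Hm Hn)) q Hq) as [q' [Hq' Hqq']].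
  exists q'. split; [exact Hq'|]. pose proof (metric_triangle dbar_metric p q q'). lra.
Qed.

Lemma liminf_endo_closed p :
  0 <= snd p <= 1 -> closure_in (dbar d) liminf_endo p -> liminf_endo p.
Proof.
  intros Hp Hcl. split; [exact Hp|]. intros e He.
  destruct (Hcl (e / 2) ltac:(lra)) as [p' [[_ Hp'] Hpp']].
  destruct (Hp' (e / 2) ltac:(lra)) as [N HN]. exists N. intros n Hn.
  destruct (HN n Hn) as [q [Hq Hp'q]]. exists q. split; [exact Hq|].
  pose proof (metric_triangle (dbar_metric) p p' q). lra.
Qed.

Lemma liminf_endo_bottom x : liminf_endo (x, 0).
Proof.
  split; [simpl; lra|]. intros e He. exists 0%nat. intros n _. exists (x, 0).
  split; [apply endo_bottom|]. rewrite (dist_refl _ _ (dbar_metric)). exact He.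
Qed.

Lemma liminf_endo_down x t s : liminf_endo (x, t) -> 0 <= s <= t -> liminf_endo (x, s).
Proof.
  intros [Ht Hlim] Hs. simpl in Ht. split; [simpl; lra|]. intros e He.
  destruct (Hlim e He) as [N HN]. exists N. intros n Hn.
  destruct (HN n Hn) as [[y r] [[Hr Hyr] Hdist]]. simpl in *.
  exists (y, Rmin r s). pose proof (Rmin_l r s). split.
  - split; simpl; [split; [apply Rmin_glb|]|]; lra.
  - assert (Rabs (s - Rmin r s) <= Rabs (t - r)).
    { unfold Rmin. destruct (Rle_dec r s).
      - rewrite !Rabs_right; lra.
      - rewrite Rminus_diag, Rabs_R0. apply Rabs_pos. }
    unfold dbar in *; simpl in *. lra.
Qed.

Lemma liminf_endo_of_seq t N (z : nat -> X) :
  0 < t <= 1 -> (forall m, t <= proj1_sig (v (N + m)) (z m)) ->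
  exists y, liminf_endo (y, t) /\ cluster_point d z y.
Proof.
  intros Ht Hz.
  assert (HzK : forall m, closure_in d (Ucut d U t) (z m)).
  { intros m. apply (closure_in_self _ _ Hd), Ucut_pos; [lra|]. exists (v (N + m)). auto. }
  destruct (compact_seq_compact _ _ Hd _ (HK t Ht) z HzK) as [y [_ Hy]].
  exists y. split; [|exact Hy].
  apply liminf_endo_of_frequently; [simpl; lra|]. intros e He M.
  destruct (Hy e He M) as [m [Hm Hym]]. exists (N + m)%nat. split; [lia|].
  exists (z m, t). split; [split; simpl; [lra | apply Rle_ge, Hz]|].
  rewrite dbar_horizontal. exact Hym.
Qed.

Definition lim_fuzzy (x : X) : R := real (Lub_Rbar (fun t => liminf_endo (x, t))).

Lemma lim_fuzzy_spec x :
  liminf_endo (x, lim_fuzzy x) /\ forall t, liminf_endo (x, t) -> t <= lim_fuzzy x.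
Proof.
  destruct (Lub_Rbar_finite (fun t => liminf_endo (x, t)) 0 1 (liminf_endo_bottom x))
    as [l [Hl [Hub Hlub]]]; [intros t [Ht _]; simpl in Ht; lra|].
  unfold lim_fuzzy. rewrite Hl. simpl. split; [|exact Hub].
  apply liminf_endo_closed.
  - split; [apply Hub, liminf_endo_bottom | apply Hlub; intros t [Ht _]; simpl in Ht; lra].
  - intros e He. apply NNPP. intros Hfar. assert (l <= l - e); [|lra].
    apply Hlub. intros t Ht. apply Rnot_lt_le. intros Hlt. apply Hfar.
    exists (x, t). split; [exact Ht|]. rewrite dbar_vertical.
    specialize (Hub t Ht). rewrite Rabs_right; lra.
Qed.

Lemma endo_lim_fuzzy p : endo lim_fuzzy p <-> liminf_endo p.
Proof.
  destruct p as [x t]. split.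
  - intros [Ht Hxt]; simpl in *.
    apply (liminf_endo_down x (lim_fuzzy x)); [apply lim_fuzzy_spec | lra].
  - intros Hp. split; [apply Hp|]. simpl. apply Rle_ge, lim_fuzzy_spec, Hp.
Qed.

Lemma lim_fuzzy_bounds x : 0 <= lim_fuzzy x <= 1.
Proof. apply (proj1 (proj1 (lim_fuzzy_spec x))). Qed.

Lemma lim_fuzzy_normal : exists x, lim_fuzzy x = 1.
Proof.
  destruct (functional_choice _ (fun m => FUSCG_normal (v m))) as [z Hz].
  destruct (liminf_endo_of_seq 1 0 z ltac:(lra)) as [y [Hy _]].
  { intros m. rewrite Hz. lra. }
  exists y. pose proof (proj2 (lim_fuzzy_spec y) 1 Hy). pose proof (lim_fuzzy_bounds y). lra.
Qed.

Lemma lim_fuzzy_level_closed a : 0 < a -> closed_in d (fun x => a <= lim_fuzzy x).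
Proof.
  intros Ha. apply closed_in_of_closure. intros x Hx. apply lim_fuzzy_spec.
  apply liminf_endo_closed.
  - destruct (Hx 1 Rlt_0_1) as [y [Hy _]]. pose proof (lim_fuzzy_bounds y). simpl. lra.
  - intros e He. destruct (Hx e He) as [y [Hy Hxy]]. exists (y, a). split.
    + apply (liminf_endo_down y (lim_fuzzy y)); [apply lim_fuzzy_spec | lra].
    + rewrite dbar_horizontal. exact Hxy.
Qed.

Lemma lim_fuzzy_level_sub a x : 0 < a -> a <= lim_fuzzy x -> closure_in d (Ucut d U (a / 2)) x.
Proof.
  intros Ha Hx e He.
  assert (Hxa : liminf_endo (x, a)).
  { apply (liminf_endo_down x (lim_fuzzy x)); [apply lim_fuzzy_spec | lra]. }
  destruct (proj2 Hxa (Rmin e (a / 2)) ltac:(apply Rmin_pos; lra)) as [N HN].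
  destruct (HN N (le_n N)) as [[y t] [[_ Hyt] Hdist]].
  pose proof (Rmin_l e (a / 2)). pose proof (Rmin_r e (a / 2)).
  pose proof (dbar_fst_le (x, a) (y, t)). pose proof (dbar_snd_le (x, a) (y, t)).
  pose proof (Rle_abs (a - t)). simpl in *.
  exists y. split; [|lra]. apply Ucut_pos; [lra|]. exists (v N). split; [apply Hv | lra].
Qed.

Lemma lim_fuzzy_FUSCG : F_USCG d lim_fuzzy.
Proof.
  destruct lim_fuzzy_normal as [x1 Hx1]. split; [split|].
  - exact lim_fuzzy_bounds.
  - intros a Ha. unfold cut. destruct (Rlt_dec 0 a) as [Hpos|Hpos].
    + split; [exists x1; lra | apply lim_fuzzy_level_closed, Hpos].
    + split; [exists x1; apply (closure_in_self _ _ Hd); lra | apply (closure_in_closed _ _ Hd)].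
  - intros a Ha. rewrite (cut_pos lim_fuzzy a) by lra.
    apply (closed_subset_compact _ _ Hd _ (closure_in d (Ucut d U (a / 2)))).
    + apply lim_fuzzy_level_closed. lra.
    + intros x. apply lim_fuzzy_level_sub. lra.
    + apply HK. lra.
Qed.

Definition lim_FUSCG : FUSCG d := exist _ lim_fuzzy lim_fuzzy_FUSCG.

Section Tail.
Variables (e : R) (N : nat).
Hypothesis He : 0 < e.
Hypothesis HN : forall m n, (N <= m)%nat -> (N <= n)%nat -> H_end d (v m) (v n) < e.

Lemma lim_sub_nbhd_endo n :
  (N <= n)%nat -> sub_nbhd (2 * e) (endo lim_fuzzy) (endg (v n)).
Proof.
  intros Hn p Hp. apply endo_lim_fuzzy in Hp.
  destruct (proj2 Hp e He) as [M HM].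
  destruct (HM (Nat.max M N) ltac:(lia)) as [q [Hq Hpq]].
  destruct (proj1 (H_end_lt_close _ _ _ (HN (Nat.max M N) n ltac:(lia) Hn)) q Hq)
    as [q' [Hq' Hqq']].
  exists q'. split; [exact Hq'|]. pose proof (metric_triangle dbar_metric p q q'). lra.
Qed.

Lemma endo_sub_nbhd_lim n :
  (N <= n)%nat -> sub_nbhd (3 * e) (endg (v n)) (endo lim_fuzzy).
Proof.
  intros Hn [x t] [Ht Hxt]. simpl in Ht, Hxt.
  destruct (Rle_lt_dec t e) as [Hlow|Hhigh].
  { exists (x, 0). split; [apply endo_lim_fuzzy, liminf_endo_bottom|].
    rewrite dbar_vertical, Rminus_0_r, Rabs_right; lra. }
  (* follow (x, t) along the tail of v, one height step e lower *)
  assert (Hz : forall m, exists z, t - e <= proj1_sig (v (N + m)) z /\ d x z < e).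
  { intros m.
    destruct (proj1 (H_end_lt_close _ _ _ (HN n (N + m) Hn ltac:(lia))) (x, t))
      as [[z s] [[_ Hzs] Hdist]]; [split; simpl; lra|].
    pose proof (dbar_fst_le (x, t) (z, s)). pose proof (dbar_snd_le (x, t) (z, s)).
    pose proof (Rle_abs (t - s)). simpl in *. exists z. split; lra. }
  destruct (functional_choice _ Hz) as [z Hz'].
  destruct (liminf_endo_of_seq (t - e) N z ltac:(lra) (fun m => proj1 (Hz' m))) as [y [Hy Hzy]].
  destruct (Hzy e He 0%nat) as [m [_ Hym]].
  exists (y, t - e). split; [apply endo_lim_fuzzy, Hy|].
  unfold dbar; simpl. replace (t - (t - e)) with e by ring. rewrite Rabs_right by lra.
  pose proof (metric_triangle Hd x (z m) y). rewrite (metric_sym Hd (z m) y) in H.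
  pose proof (proj2 (Hz' m)). lra.
Qed.

End Tail.

Lemma lim_FUSCG_tends_to : tends_to (H_end d) v lim_FUSCG.
Proof.
  intros e He. destruct (Hv_cauchy (e / 4) ltac:(lra)) as [N HN]. exists N. intros n Hn.
  apply Rle_lt_trans with (3 * (e / 4)); [|lra].
  apply H_end_le_of_close. split.
  - apply (sub_nbhd_mono (2 * (e / 4))); [lra|].
    exact (lim_sub_nbhd_endo (e / 4) N ltac:(lra) HN n Hn).
  - exact (endo_sub_nbhd_lim (e / 4) N ltac:(lra) HN n Hn).
Qed.

End CauchyLimit.

Lemma rel_compact_closed_compact (U : FUSCG d -> Prop) :
  (forall a, 0 < a <= 1 -> rel_compact_in d (Ucut d U a)) ->
  closed_in (H_end d) U -> compact_in (H_end d) U.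
Proof.
  intros HK HU. apply (seq_compact_compact _ _ H_end_metric). intros w Hw.
  destruct (classifiable_cauchy_subseq _ _ U w (FUSCG_classifiable U HK) Hw)
    as [phi [Hphi Hcauchy]].
  pose proof (lim_FUSCG_tends_to U HK _ (fun k => Hw (phi k)) Hcauchy) as Hlim.
  apply tends_to_cluster_point in Hlim.
  eexists. split.
  - apply (closed_in_closure _ _ U _ HU).
    exact (cluster_point_closure _ _ U _ _ (fun k => Hw (phi k)) Hlim).
  - exact (cluster_point_of_subseq _ _ w phi _ Hphi Hlim).
Qed.

End FuzzySets.

Theorem theorem5p10 (X : Type) (d : X -> X -> R) (Hd : @is_metric X d)
  (U : @FUSCG X d -> Prop) :
  (@compact_in (@FUSCG X d) (@H_end X d) U <->
     ((forall a, 0 < a <= 1 -> @rel_compact_in X d (@Ucut X d U a)) /\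
      @closed_in (@FUSCG X d) (@H_end X d) U)) /\
  (((forall a, 0 < a <= 1 -> @rel_compact_in X d (@Ucut X d U a)) /\
      @closed_in (@FUSCG X d) (@H_end X d) U) <->
   ((forall a, 0 < a <= 1 -> @compact_in X d (@Ucut X d U a)) /\
      @closed_in (@FUSCG X d) (@H_end X d) U)).
Proof.
  split; split.
  - intros HU. split; [|exact (compact_closed _ _ (H_end_metric _ _ Hd) U HU)].
    intros a Ha. apply (compact_rel_compact _ _ Hd), (compact_Ucut_compact _ _ Hd); assumption.
  - intros [HK HU]. apply rel_compact_closed_compact; assumption.
  - intros [HK HU]. split; [|exact HU]. intros a Ha.
    apply (compact_Ucut_compact _ _ Hd); [apply rel_compact_closed_compact|]; assumption.
  - intros [HK HU]. split; [|exact HU]. intros a Ha. apply (compact_rel_compact _ _ Hd), HK, Ha.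
Qed.
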